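(* Let $n\neq 0,-1$ be an integer and let $K_n$ be the $n$-twist knot with exterior $E_{K_n}$, meridian $m$ and preferred longitude $\ell$. Then every irreducible metabelian representation $\rho:\pi_1(E_{K_n})\to SL(2,\mathbb{C})$ satisfies $\rho(m^4\ell)=\mathbf{1}$; that is, every irreducible metabelian $SL(2,\mathbb{C})$-representation of $\pi_1(E_{K_n})$ lies in $R(M)$, where $M$ is the manifold obtained by $4$-surgery along $K_n$.
   Context: For a knot $K\subset S^3$, $E_K$ denotes its exterior (the complement of an open tubular neighbourhood). The $n$-twist knot $K_n$ is the two-bridge knot whose group has the presentation $\pi_1(E_{K_n})=\langle \alpha,\beta\mid \omega^n\alpha=\beta\omega^n\rangle$ with $\alpha,\beta$ meridians and $\omega=\beta\alpha^{-1}\beta^{-1}\alpha$; its Alexander polynomial is $-nt^2+(2n+1)t-n$, and $K_1$ is the figure-eight knot. $M$ is obtained by $4$-surgery along $K_n$, so $\pi_1(M)\cong\pi_1(E_{K_n})/\langle\!\langle m^4\ell\rangle\!\rangle$. For a space $X$, $R(X)$ denotes the set of homomorphisms $\pi_1(X)\to SL(2,\mathbb{C})$; via pull-back along the quotient map, $R(M)$ is identified with $\{\rho\in R(E_{K_n})\mid \rho(m^4\ell)=\mathbf{1}\}$. A representation is irreducible if the only subspaces of $\mathbb{C}^2$ invariant under its image are $\{0\}$ and $\mathbb{C}^2$; it is metabelian if the image of the commutator subgroup is abelian. *)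

From HB Require Import structures.
From mathcomp Require Import all_boot all_order all_algebra.
From mathcomp Require Import complex.
From mathcomp Require Import Rstruct.
From Stdlib Require Import Rdefinitions.
Set Implicit Arguments. Unset Strict Implicit. Unset Printing Implicit Defensive.
Import Order.TTheory GRing.Theory Num.Theory.
Local Open Scope ring_scope.
Local Open Scope complex_scope.

Notation CC := ((Rdefinitions.R)[i]).

Notation mat2 := ('M[CC]_2).

Definition inSL2 (X : mat2) : Prop := \det X = 1.

(* omega = beta alpha^-1 beta^-1 alpha, evaluated at rho(alpha)=A, rho(beta)=B *)
Definition omega (A B : mat2) : mat2 := B * A^-1 * B^-1 * A.

Definition omega_rev (A B : mat2) : mat2 := A * B^-1 * A^-1 * B.

Definition longitude (n : int) (A B : mat2) : mat2 :=
  (omega_rev A B) ^ n * (omega A B) ^ n.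

(* rho : pi_1(E_{K_n}) -> SL(2,C), given by the images A, B of the meridian
   generators alpha, beta, satisfying the defining relation. *)
Definition twist_rep (n : int) (A B : mat2) : Prop :=
  [/\ inSL2 A, inSL2 B & (omega A B) ^ n * A = B * (omega A B) ^ n].

Inductive gen_grp (S : mat2 -> Prop) : mat2 -> Prop :=
  | gen_in  : forall x, S x -> gen_grp S x
  | gen_one : gen_grp S 1
  | gen_mul : forall x y, gen_grp S x -> gen_grp S y -> gen_grp S (x * y)
  | gen_inv : forall x, gen_grp S x -> gen_grp S x^-1.

Definition image_grp (A B : mat2) : mat2 -> Prop :=
  gen_grp (fun X => X = A \/ X = B).

Definition image_commutator (A B : mat2) : mat2 -> Prop :=
  gen_grp (fun X => exists g h, image_grp A B g /\ image_grp A B h /\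
                                X = g^-1 * h^-1 * g * h).

Definition metabelian (A B : mat2) : Prop :=
  forall x y, image_commutator A B x -> image_commutator A B y -> x * y = y * x.

Definition subspace (V : 'cV[CC]_2 -> Prop) : Prop :=
  [/\ V 0, (forall u v, V u -> V v -> V (u + v)) &
      (forall (c : CC) v, V v -> V (c *: v))].

Definition invariant (X : mat2) (V : 'cV[CC]_2 -> Prop) : Prop :=
  forall v, V v -> V (X *m v).

Definition irreducible (A B : mat2) : Prop :=
  forall V, subspace V ->
    (forall X, image_grp A B X -> invariant X V) ->
    (forall v, V v <-> v = 0) \/ (forall v, V v).

(* Let x be the image of omega^n.  The defining relation gives B = x A x^-1, so
   A^-1 B and B A^-1 are commutators of elements of the image; by metabelianity
   they commute.  This makes the images of omega and of the reversed word
   mutually inverse, hence the longitude maps to 1.  The same commutation gives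
   tr A * det (AB - BA) = 0.  Irreducibility forces det (AB - BA) <> 0, since
   otherwise the kernel of AB - BA, or a common eigenline when A and B commute,
   would be an invariant line.  So tr A = 0, A^2 = -1 by Cayley-Hamilton, and
   A^4 = 1. *)

From Pilot Require Import Defs.
From HB Require Import structures.
From mathcomp Require Import all_boot all_order all_algebra.
From mathcomp Require Import complex Rstruct ring.
Set Implicit Arguments.
Unset Strict Implicit.
Unset Printing Implicit Defensive.

Import GRing.Theory.
Local Open Scope ring_scope.

Section Matrix2.

Variable R : comNzRingType.
Implicit Types (a b c d : R) (A B X : 'M[R]_2).

Definition mx2 a b c d : 'M[R]_2 :=
  \matrix_(i, j) if i == 0 then (if j == 0 then a else b)
                 else (if j == 0 then c else d).

Lemma ord2P (i : 'I_2) : i = 0 \/ i = 1.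
Proof. by case: i => [[|[|k]] Hi]; [left|right|by []]; exact: val_inj. Qed.

Lemma mx2_eta X : X = mx2 (X 0 0) (X 0 1) (X 1 0) (X 1 1).
Proof.
apply/matrixP => i j; rewrite mxE.
by case: (ord2P i) => ->; case: (ord2P j) => ->.
Qed.

Lemma mx2_ind (P : 'M[R]_2 -> Prop) :
  (forall a b c d, P (mx2 a b c d)) -> forall X, P X.
Proof. by move=> PX X; rewrite (mx2_eta X). Qed.

Lemma mx2_congr a b c d a' b' c' d' :
  a = a' -> b = b' -> c = c' -> d = d' -> mx2 a b c d = mx2 a' b' c' d'.
Proof. by move=> -> -> -> ->. Qed.

Lemma mx2_mul a b c d a' b' c' d' :
  mx2 a b c d * mx2 a' b' c' d' =
  mx2 (a * a' + b * c') (a * b' + b * d') (c * a' + d * c') (c * b' + d * d').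
Proof.
apply/matrixP => i j; rewrite !mxE !big_ord_recl big_ord0 !mxE.
by case: (ord2P i) => ->; case: (ord2P j) => -> /=; rewrite addr0.
Qed.

Lemma mx2_add a b c d a' b' c' d' :
  mx2 a b c d + mx2 a' b' c' d' = mx2 (a + a') (b + b') (c + c') (d + d').
Proof.
apply/matrixP => i j; rewrite !mxE.
by case: (ord2P i) => ->; case: (ord2P j) => ->.
Qed.

Lemma mx2_opp a b c d : - mx2 a b c d = mx2 (- a) (- b) (- c) (- d).
Proof.
apply/matrixP => i j; rewrite !mxE.
by case: (ord2P i) => ->; case: (ord2P j) => ->.
Qed.

Lemma mx2_scale k a b c d :
  k *: mx2 a b c d = mx2 (k * a) (k * b) (k * c) (k * d).
Proof.
apply/matrixP => i j; rewrite !mxE.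
by case: (ord2P i) => ->; case: (ord2P j) => ->.
Qed.

Lemma mx2_scalar k : k%:M = mx2 k 0 0 k.
Proof.
apply/matrixP => i j; rewrite !mxE.
by case: (ord2P i) => ->; case: (ord2P j) => ->.
Qed.

Lemma mx2_det a b c d : \det (mx2 a b c d) = a * d - b * c.
Proof.
rewrite (expand_det_row _ 0) !big_ord_recl big_ord0 /cofactor !det_mx11 !mxE /=.
rewrite /bump /= expr0 expr1; ring.
Qed.

Lemma mx2_trace a b c d : \tr (mx2 a b c d) = a + d.
Proof. by rewrite /mxtrace !big_ord_recl big_ord0 !mxE /= addr0. Qed.

Lemma mx2_adj a b c d : \adj (mx2 a b c d) = mx2 d (- b) (- c) a.
Proof.
apply/matrixP => i j; rewrite !mxE /cofactor det_mx11 !mxE.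
case: (ord2P i) => ->; case: (ord2P j) => -> /=;
  rewrite /bump /= ?expr0 ?expr1 ?expr2; ring.
Qed.

Definition mx2E := (mx2_mul, mx2_add, mx2_opp, mx2_scale, mx2_scalar,
  mx2_det, mx2_trace, mx2_adj).

Lemma adj_mx2 X : \adj X = (\tr X)%:M - X.
Proof. by elim/mx2_ind: X => a b c d; rewrite !mx2E; apply: mx2_congr; ring. Qed.

Lemma Cayley_Hamilton_mx2 X : X * X = \tr X *: X - (\det X)%:M.
Proof. by elim/mx2_ind: X => a b c d; rewrite !mx2E; apply: mx2_congr; ring. Qed.

Lemma commutator_mul_adj A B : (A * B - B * A) * A = \adj A * (A * B - B * A).
Proof.
elim/mx2_ind: A => a b c d; elim/mx2_ind: B => e f g h.
by rewrite !mx2E; apply: mx2_congr; ring.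
Qed.

(* When det A = 1 the right-hand side is tr ((QP - PQ) A) with P = A^-1 B and
   Q = B A^-1. *)
Lemma trace_det_commutator A B :
  \tr A * \det (A * B - B * A) =
  \tr ((B * \adj A * (\adj A * B) - \adj A * B * (B * \adj A)) * A).
Proof.
elim/mx2_ind: A => a b c d; elim/mx2_ind: B => e f g h.
rewrite !mx2E; ring.
Qed.

Lemma expr4_trace0_det1 A : \det A = 1 -> \tr A = 0 -> A ^+ 4 = 1.
Proof.
move=> detA trA.
have sqA : A * A = -1 by rewrite Cayley_Hamilton_mx2 trA detA scale0r sub0r.
by rewrite (_ : 4 = 2 + 2)%N // exprD expr2 sqA mulrNN mulr1.
Qed.

End Matrix2.

Lemma det0_kernel (F : fieldType) n (M : 'M[F]_n) :
  \det M = 0 -> exists2 v : 'cV_n, v != 0 & M *m v = 0.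
Proof.
move/eqP; rewrite -det_tr => /det0P [w nz_w wMT].
exists w^T; first by rewrite trmx_eq0.
by rewrite -[M]trmxK -trmx_mul wMT trmx0.
Qed.

Lemma mulmx_cV_eq0 (R : pzRingType) m n (M : 'M[R]_(m, n)) :
  (forall v : 'cV_n, M *m v = 0) -> M = 0.
Proof.
move=> Mv0; apply/matrixP => i j.
by have /matrixP/(_ i 0) := Mv0 (delta_mx j 0); rewrite -colE !mxE.
Qed.

Lemma exists_eigenvalue (F : closedFieldType) n (A : 'M[F]_n.+1) :
  exists a, \det (A - a%:M) = 0.
Proof.
have /closed_rootP [a] : size (char_poly A) != 1 by rewrite size_char_poly.
rewrite -eigenvalue_root_char => /eigenvalueP [v vA nz_v].
exists a; apply/eqP/det0P; exists v => //.
by rewrite mulmxBr vA mul_mx_scalar subrr.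
Qed.

Lemma scalar_mx_commute (R : comNzRingType) n (a : R) (X : 'M[R]_n.+1) :
  a%:M * X = X * a%:M.
Proof. exact: comm_scalar_mx. Qed.

Implicit Types (A B M X Y : mat2).

Lemma inSL2_unit X : inSL2 X -> X \is a GRing.unit.
Proof. by rewrite /inSL2 unitmxE => ->; rewrite unitr1. Qed.

Lemma inSL2_inv X : inSL2 X -> X^-1 = \adj X.
Proof.
rewrite /inSL2 => detX; rewrite [X^-1]/(invmx X) /invmx unitmxE detX.
by rewrite unitr1 invr1 scale1r.
Qed.

Lemma inSL2_mul X Y : inSL2 X -> inSL2 Y -> inSL2 (X * Y).
Proof. by rewrite /inSL2 -mulmxE det_mulmx => -> ->; rewrite mulr1. Qed.

Lemma inSL2V X : inSL2 X -> inSL2 X^-1.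
Proof.
by rewrite /inSL2 => detX; rewrite [X^-1]/(invmx X) det_inv detX invr1.
Qed.

Lemma image_grp_SL2 A B X : inSL2 A -> inSL2 B -> image_grp A B X -> inSL2 X.
Proof.
move=> SA SB; elim=> {X} [X [->|->] //||X Y _ SX _ SY|X _ SX].
- exact: det1.
- exact: inSL2_mul.
- exact: inSL2V.
Qed.

Definition kernel (M : mat2) : 'cV[CC]_2 -> Prop := fun v => M *m v = 0.

Lemma subspace_kernel M : subspace (kernel M).
Proof.
split=> [|u v Mu Mv|k v Mv]; rewrite /kernel.
- exact: mulmx0.
- by rewrite mulmxDr Mu Mv addr0.
- by rewrite -scalemxAr Mv scaler0.
Qed.

Lemma invariant_kernel M X Y : M * X = Y * M -> Defs.invariant X (kernel M).
Proof.
by move=> MXY v Mv; rewrite /kernel mulmxA mulmxE MXY -mulmxE -mulmxA Mv mulmx0.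
Qed.

(* On SL(2), X^-1 = \adj X = (tr X) 1 - X is a linear combination of 1 and X. *)
Lemma invariantV X V :
  subspace V -> inSL2 X -> Defs.invariant X V -> Defs.invariant X^-1 V.
Proof.
move=> [_ VD VZ] SX XV v Vv.
rewrite inSL2_inv // adj_mx2 mulmxBl mul_scalar_mx -scaleN1r.
by apply: VD; [apply: VZ | apply/VZ/XV].
Qed.

Lemma image_grp_invariant A B V : subspace V -> inSL2 A -> inSL2 B ->
  Defs.invariant A V -> Defs.invariant B V ->
  forall X, image_grp A B X -> Defs.invariant X V.
Proof.
move=> sV SA SB AV BV X; elim=> {X} [X [->|->] //||X Y _ XV _ YV|X gX XV].
- by move=> v Vv; rewrite mul1mx.
- by move=> v Vv; rewrite -mulmxE -mulmxA; apply/XV/YV.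
- by apply: invariantV => //; apply: image_grp_SL2 gX.
Qed.

Section Irreducible.

Variables A B : mat2.
Hypotheses (SA : inSL2 A) (SB : inSL2 B) (irrAB : irreducible A B).

Lemma irreducible_intertwiner_eq0 M A' B' :
  \det M = 0 -> M * A = A' * M -> M * B = B' * M -> M = 0.
Proof.
move=> detM MA MB; have sK := subspace_kernel M.
have [K0|Kall] := irrAB sK (image_grp_invariant sK SA SB
                              (invariant_kernel MA) (invariant_kernel MB)).
- have [v nz_v Mv] := det0_kernel detM.
  by move: nz_v; rewrite (K0 v).1 // eqxx.
- exact: mulmx_cV_eq0.
Qed.

Lemma irreducible_det_commutator : \det (A * B - B * A) != 0.
Proof.
apply/eqP => detC.
have commAB : A * B = B * A.
  apply: subr0_eq (irreducible_intertwiner_eq0 detC (commutator_mul_adj A B) _).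
  by rewrite -opprB mulNr commutator_mul_adj mulrN.
have scalar_of X : X * A = A * X -> X * B = B * X -> exists a, X = a%:M.
  move=> XA XB; have [a detXa] := exists_eigenvalue X.
  exists a; apply/subr0_eq/(irreducible_intertwiner_eq0 detXa).
  - by rewrite mulrBl mulrBr XA scalar_mx_commute.
  - by rewrite mulrBl mulrBr XB scalar_mx_commute.
have [a Aa] := scalar_of A erefl commAB.
have [b Bb] := scalar_of B (esym commAB) erefl.
have E0 : mx2 1 0 0 0 = 0 :> mat2.
  apply: irreducible_intertwiner_eq0.
  - by rewrite mx2_det mulr0 mulr0 subr0.
  - by rewrite Aa -scalar_mx_commute.
  - by rewrite Bb -scalar_mx_commute.
by move/matrixP/(_ 0 0): E0; rewrite !mxE; apply/eqP; exact: oner_neq0.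
Qed.

End Irreducible.

Lemma gen_grp_expz S X (k : int) : gen_grp S X -> gen_grp S (X ^ k).
Proof.
move=> gX; have gXn (m : nat) : gen_grp S (X ^+ m).
  elim: m => [|m IH]; first exact: gen_one.
  by rewrite exprS; apply: gen_mul.
by case: k => m; [exact: gXn | exact/gen_inv/gXn].
Qed.

Lemma image_grp_omega A B : image_grp A B (omega A B).
Proof.
have gA : image_grp A B A by apply: gen_in; left.
have gB : image_grp A B B by apply: gen_in; right.
by rewrite /omega; repeat apply: gen_mul; try apply: gen_inv.
Qed.

Lemma conj_metabelian_commute A B X : metabelian A B -> image_grp A B X ->
  B = X * A * X^-1 -> A^-1 * B * (B * A^-1) = B * A^-1 * (A^-1 * B).
Proof.
move=> metAB gX BE; apply: metAB; apply: gen_in.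
- exists A, X^-1; do !split; [by apply: gen_in; left | exact: gen_inv |].
  by rewrite invrK BE !mulrA.
- exists X^-1, A^-1; do !split; [exact: gen_inv | by apply/gen_inv/gen_in; left|].
  by rewrite !invrK BE.
Qed.

Section CommutingCommutators.

Variables A B : mat2.
Hypotheses (SA : inSL2 A) (SB : inSL2 B).
Hypothesis commPQ : A^-1 * B * (B * A^-1) = B * A^-1 * (A^-1 * B).

Lemma omega_rev_inv : omega_rev A B = (omega A B)^-1.
Proof.
have [uA uB] := (inSL2_unit SA, inSL2_unit SB).
have uP : A^-1 * B \is a GRing.unit by rewrite unitrMr // unitrV.
have uQ : B * A^-1 \is a GRing.unit by rewrite unitrMl // unitrV.
have omegaE : omega A B = B * A^-1 * (A^-1 * B)^-1.
  by rewrite /omega invrM ?unitrV // invrK !mulrA.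
have omega_revE : omega_rev A B = (B * A^-1)^-1 * (A^-1 * B).
  by rewrite /omega_rev invrM ?unitrV // invrK !mulrA.
have uw : omega A B \is a GRing.unit by rewrite omegaE unitrMr // unitrV.
have revw : omega_rev A B * omega A B = 1.
  rewrite omegaE omega_revE.
  move: (A^-1 * B) (B * A^-1) commPQ uP uQ => P Q PQ uP uQ.
  by rewrite -mulrA (mulrA P) PQ mulrK // mulVr.
by rewrite -[LHS]mulr1 -(mulrV uw) mulrA revw mul1r.
Qed.

Lemma longitude_eq1 n : longitude n A B = 1.
Proof.
have uw : omega A B \is a GRing.unit.
  exact/inSL2_unit/(image_grp_SL2 SA SB)/image_grp_omega.
by rewrite /longitude omega_rev_inv exprz_inv -invr_expz mulVr // unitrXz.
Qed.

Lemma trace_mul_det_commutator_eq0 : \tr A * \det (A * B - B * A) = 0.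
Proof.
by rewrite trace_det_commutator -(inSL2_inv SA) commPQ subrr mul0r mxtrace0.
Qed.

End CommutingCommutators.

Theorem lemma2p12 (n : int) (hn0 : n != 0) (hn1 : n != -1) (A B : mat2)
    (hrho : twist_rep n A B) (hirr : irreducible A B) (hmet : metabelian A B) :
  A ^+ 4 * longitude n A B = 1.
Proof.
case: hrho => SA SB rel.
have gx : image_grp A B (omega A B ^ n) by apply/gen_grp_expz/image_grp_omega.
have BE : B = omega A B ^ n * A * (omega A B ^ n)^-1.
  by rewrite rel mulrK // (inSL2_unit (image_grp_SL2 SA SB gx)).
have commPQ := conj_metabelian_commute hmet gx BE.
rewrite longitude_eq1 // mulr1; apply: expr4_trace0_det1 => //.
have /eqP := trace_mul_det_commutator_eq0 SA commPQ.
by rewrite mulf_eq0 (negbTE (irreducible_det_commutator SA SB hirr)) orbF => /eqP.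
Qed.
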